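(* Every deterministic mechanism for locating one facility on $[0,1]$ that is anonymous, Pareto efficient and strategy proof has approximation ratio at least $\frac{3}{2\sqrt2}$ for the Nash welfare.
   Context: Agents $1,\dots,n$ report locations $x_1,\dots,x_n\in[0,1]$; a deterministic mechanism $f$ maps each profile (for each $n$) to a facility location $y=f(x_1,\dots,x_n)\in[0,1]$. Agent $i$'s utility is $u_i=1-|x_i-y|$; the Nash welfare is $\left(\prod_i u_i\right)^{1/n}$. $f$ is anonymous if permuting the reports does not change the output; Pareto efficient if for no profile is there a location $z$ with $|x_j-z|\le|x_j-f(x)|$ for all $j$ and strict inequality for some $i$; strategy proof if no agent $i$ can report some $x_i'$ and obtain $|x_i-f(x_1,\dots,x_i',\dots,x_n)|<|x_i-f(x)|$. The approximation ratio of $f$ for the Nash welfare is the supremum over all profiles $x$ of $\mathrm{OPT}(x)/\mathrm{NW}(f(x))$, where $\mathrm{OPT}(x)$ is the maximum Nash welfare over facility locations in $[0,1]$. *)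

From HB Require Import structures.
From mathcomp Require Import all_boot all_order all_algebra all_fingroup.
From mathcomp Require Import all_classical all_reals all_analysis.
Set Implicit Arguments. Unset Strict Implicit. Unset Printing Implicit Defensive.
Import Order.TTheory GRing.Theory Num.Theory.
Local Open Scope ring_scope.
Local Open Scope classical_set_scope.

Section FacilityLocation.
Variable R : realType.

Definition in01 (t : R) : Prop := 0 <= t <= 1.

Definition profile01 (n : nat) (x : 'I_n -> R) : Prop := forall i, in01 (x i).

Definition util (xi y : R) : R := 1 - `|xi - y|.

Definition nash_welfare (n : nat) (x : 'I_n -> R) (y : R) : R :=
  (\prod_(i < n) util (x i) y) `^ (n%:R)^-1.

Definition opt_nw (n : nat) (x : 'I_n -> R) : R :=
  sup (nash_welfare x @` [set y | in01 y]).

Definition mechanism := forall n : nat, ('I_n -> R) -> R.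

Definition valid_mechanism (f : mechanism) : Prop :=
  forall n (x : 'I_n -> R), profile01 x -> in01 (f n x).

Definition anonymous (f : mechanism) : Prop :=
  forall n (s : 'S_n) (x : 'I_n -> R), profile01 x ->
    f n (fun i => x (s i)) = f n x.

Definition pareto_efficient (f : mechanism) : Prop :=
  forall n (x : 'I_n -> R), profile01 x ->
    ~ exists z : R, in01 z /\
        (forall j, `|x j - z| <= `|x j - f n x|) /\
        (exists i, `|x i - z| < `|x i - f n x|).

Definition strategy_proof (f : mechanism) : Prop :=
  forall n (x : 'I_n -> R) (i : 'I_n) (xi' : R), profile01 x -> in01 xi' ->
    ~ (`|x i - f n (fun j => if j == i then xi' else x j)| < `|x i - f n x|).

(* approximation ratio sup_x OPT(x)/NW(f(x)) is at least c, i.e. for every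
   r < c some profile has OPT(x) > r * NW(f(x))  (this also covers NW = 0,
   where the ratio is +oo) *)
Definition approx_ratio_at_least (f : mechanism) (c : R) : Prop :=
  forall r : R, r < c ->
    exists n (x : 'I_n -> R), profile01 x /\ r * nash_welfare x (f n x) < opt_nw x.

End FacilityLocation.

(* Let a = f(0,1) and suppose a <= 1/2 (the other case is symmetric, with the
   profile (0,a)).  At the profile (a,1) the mechanism must still output a:
   otherwise the agent at a would report 0 and get the facility at her own
   location.  There the Nash welfare is sqrt a, whereas the midpoint (1+a)/2
   achieves (1+a)/2, and (1+a)/(2 sqrt a) >= 3/(2 sqrt 2) for 0 < a <= 1/2. *)
From HB Require Import structures.
From mathcomp Require Import all_boot all_order all_algebra all_fingroup.
From mathcomp Require Import all_classical all_reals all_analysis.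
From mathcomp Require Import ring lra.
Import Order.TTheory GRing.Theory Num.Theory.
Local Open Scope ring_scope.

Section TwoAgents.
Context {R : realType}.
Implicit Types (p q y r d : R).

Lemma in01_0 : in01 (0 : R).
Proof. by rewrite /in01 lexx ler01. Qed.

Lemma in01_1 : in01 (1 : R).
Proof. by rewrite /in01 lexx ler01. Qed.

Lemma util_xx p : util p p = 1.
Proof. by rewrite /util subrr normr0 subr0. Qed.

Lemma utilC p q : util p q = util q p.
Proof. by rewrite /util distrC. Qed.

Lemma util_midpoint p q : util p ((p + q) / 2) = 1 - `|q - p| / 2.
Proof.
rewrite /util; have -> : p - (p + q) / 2 = - ((q - p) / 2) by field.
by rewrite normrN normf_div [`|2|]ger0_norm.
Qed.

Lemma dist01_le1 {p q : R} : in01 p -> in01 q -> `|q - p| <= 1.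
Proof. by move=> /andP[? ?] /andP[? ?]; rewrite ler_norml; apply/andP; split; lra. Qed.

Definition profile2 p q : 'I_2 -> R := fun i => if i == ord0 then p else q.

Lemma profile2_01 p q : in01 p -> in01 q -> profile01 (profile2 p q).
Proof. by move=> hp hq i; rewrite /profile2; case: ifP. Qed.

Lemma nash_welfare2 p q y : 0 <= util p y * util q y ->
  nash_welfare (profile2 p q) y = Num.sqrt (util p y * util q y).
Proof.
move=> h; rewrite /nash_welfare !big_ord_recl big_ord0 mulr1 /profile2 /=.
by rewrite powR12_sqrt.
Qed.

Lemma nash_welfare2_endpoint p q y : in01 p -> in01 q -> y = p \/ y = q ->
  nash_welfare (profile2 p q) y = Num.sqrt (1 - `|q - p|).
Proof.
move=> hp hq hy; have d1 := dist01_le1 hp hq.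
have uy : util p y * util q y = 1 - `|q - p|.
  case: hy => ->; rewrite util_xx ?mul1r ?mulr1 //.
  by rewrite utilC /util distrC.
by rewrite nash_welfare2 uy // subr_ge0.
Qed.

Lemma nash_welfare2_midpoint p q : in01 p -> in01 q ->
  nash_welfare (profile2 p q) ((p + q) / 2) = 1 - `|q - p| / 2.
Proof.
move=> hp hq; have d1 := dist01_le1 hp hq.
rewrite nash_welfare2 util_midpoint (addrC p) util_midpoint (distrC p q) -expr2.
  by rewrite sqrtr_sqr ger0_norm //; lra.
exact: sqr_ge0.
Qed.

Lemma nash_welfare2_le_opt p q y : in01 p -> in01 q -> in01 y ->
  nash_welfare (profile2 p q) y <= opt_nw (profile2 p q).
Proof.
move=> hp hq hy; apply: ub_le_sup; last by exists y.
exists 1 => _ [z /andP[z0 z1] <-].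
have util01 x : in01 x -> 0 <= util x z <= 1.
  move=> /andP[? ?]; rewrite /util lerBlDr lerDl normr_ge0 andbT subr_ge0.
  by rewrite ler_norml; apply/andP; split; lra.
have /andP[up0 up1] := util01 _ hp; have /andP[uq0 uq1] := util01 _ hq.
rewrite nash_welfare2 ?mulr_ge0 // -(sqrtr1 R) ler_sqrt //.
exact: mulr_ile1.
Qed.

(* (1 - d/2) / sqrt (1 - d) increases on [0,1) and equals 3/(2 sqrt 2) at d = 1/2. *)
Lemma midpoint_endpoint_ratio r d : r < 3 / (2 * Num.sqrt 2) ->
  2^-1 <= d <= 1 -> r * Num.sqrt (1 - d) < 1 - d / 2.
Proof.
move=> hr /andP[d_ge d_le].
set t : R := Num.sqrt 2; set s : R := Num.sqrt (1 - d).
have t0 : 0 < t by rewrite sqrtr_gt0.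
have t2 : t ^+ 2 = 2 by rewrite sqr_sqrtr.
have s0 : 0 <= s by exact: sqrtr_ge0.
have s2 : s ^+ 2 = 1 - d by rewrite sqr_sqrtr // subr_ge0.
have ts1 : t * s <= 1.
  have ts0 : 0 <= t * s by exact: mulr_ge0 (ltW t0) s0.
  have : (t * s) ^+ 2 <= 1 by rewrite exprMn t2 s2; lra.
  nra.
have -> : 1 - d / 2 = (1 + s ^+ 2) / 2 by rewrite s2; field.
have [->|s_neq0] := eqVneq s 0; first by rewrite mulr0 expr2 mulr0; lra.
have s_gt0 : 0 < s by rewrite lt_def s_neq0.
apply: (@lt_le_trans _ _ (3 / (2 * t) * s)); first by rewrite ltr_pM2r.
rewrite mulrAC ler_pdivrMr ?mulr_gt0 //.
have -> : (1 + s ^+ 2) / 2 * (2 * t) = (1 + s ^+ 2) * t by field.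
(* 3 s <= (1 + s^2) t  is  (t s - 1)(s - t) >= 0, both factors being <= 0 *)
have : 0 <= (t * s - 1) * (s - t) by apply: mulr_le0; nra.
nra.
Qed.

Lemma profile2_gap_witness r p q y : r < 3 / (2 * Num.sqrt 2) ->
  in01 p -> in01 q -> 2^-1 <= `|q - p| -> y = p \/ y = q ->
  r * nash_welfare (profile2 p q) y < opt_nw (profile2 p q).
Proof.
move=> hr hp hq gap hy.
have hm : in01 ((p + q) / 2).
  by move: hp hq => /andP[? ?] /andP[? ?]; apply/andP; split; lra.
apply: (lt_le_trans _ (nash_welfare2_le_opt _ _ _ hp hq hm)).
rewrite nash_welfare2_endpoint // nash_welfare2_midpoint //.
by apply: midpoint_endpoint_ratio; rewrite // gap dist01_le1.
Qed.

End TwoAgents.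

Lemma strategy_proof_fixed {R : realType} {f : mechanism R} {n} {x : 'I_n -> R}
    (i : 'I_n) (xi' : R) :
  strategy_proof f -> profile01 x -> in01 xi' ->
  f n (fun j => if j == i then xi' else x j) = x i -> f n x = x i.
Proof.
move=> hsp hx hxi' fixed; have := hsp n x i xi' hx hxi'.
rewrite fixed subrr normr0 normr_gt0 subr_eq0 eq_sym => /negP.
by rewrite negbK => /eqP.
Qed.

Theorem theorem12 (R : realType) (f : mechanism R) :
  valid_mechanism f -> anonymous f -> pareto_efficient f -> strategy_proof f ->
  approx_ratio_at_least f (3 / (2 * Num.sqrt 2)).
Proof.
move=> hv _ _ hsp r hr.
have p01 : profile01 (profile2 (0 : R) 1) := profile2_01 _ _ in01_0 in01_1.
have ha := hv 2%N _ p01; set a := f 2%N _ in ha.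
have [a0 a1] : 0 <= a /\ a <= 1 by move: ha => /andP.
have [a_le|a_gt] := lerP a 2^-1.
- have pa := profile2_01 _ _ ha in01_1.
  have fa : f 2%N (profile2 a 1) = a.
    apply: (strategy_proof_fixed ord0 0 hsp pa in01_0).
    by congr (f 2%N); apply: funext => j; rewrite /profile2; case: ifP => // ->.
  exists 2%N, (profile2 a 1); split => //; rewrite fa.
  apply: (profile2_gap_witness r a 1 a hr ha in01_1 _ (or_introl erefl)).
  by rewrite ger0_norm; lra.
- have pa := profile2_01 _ _ in01_0 ha.
  have fa : f 2%N (profile2 0 a) = a.
    apply: (strategy_proof_fixed ord_max 1 hsp pa in01_1).
    by congr (f 2%N); apply: funext => -[[|[|m]] hm].
  exists 2%N, (profile2 0 a); split => //; rewrite fa.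
  apply: (profile2_gap_witness r 0 a a hr in01_0 ha _ (or_intror erefl)).
  by rewrite subr0 ger0_norm; lra.
Qed.
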